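(* Let $H=K_{i_1,1,\dots,1}$ be the complete multipartite graph with $m$ parts, one part of size $i_1\le 2$ and all other parts of size $1$. Then $b_H(n)=\Theta(n^{m-1})$ as $n\to\infty$.
   Context: For a graph $G$, $\mathrm{cl}(G)$ denotes its clique complex. For a finite simple graph $H$ and a fixed field $\mathbb{K}$, $b_H(n)=\max_G \sum_{i\ge -1}\dim_{\mathbb{K}}\widetilde H_i(\mathrm{cl}(G);\mathbb{K})$, where $G$ ranges over all simple graphs on at most $n$ vertices containing no induced copy of $H$ (reduced homology, the empty graph contributing $1$). *)

From mathcomp Require Import all_boot all_order all_algebra.
Set Implicit Arguments. Unset Strict Implicit. Unset Printing Implicit Defensive.
Import GRing.Theory.
Local Open Scope ring_scope.

Definition graph (k : nat) := {ffun 'I_k * 'I_k -> bool}.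

Definition simple_graph k (g : graph k) : bool :=
  [forall x, ~~ g (x, x)] && [forall x, [forall y, g (x, y) == g (y, x)]].

Definition is_clique k (g : graph k) (A : {set 'I_k}) : bool :=
  [forall x in A, [forall y in A, (x != y) ==> g (x, y)]].

(* faces with s vertices (dimension s-1); s = 0 gives the empty face *)
Definition faces k (g : graph k) (s : nat) : {set {set 'I_k}} :=
  [set A : {set 'I_k} | is_clique g A & #|A| == s].

(* sign exponent: position of the removed vertex in the ordered face *)
Definition bd_sign k (A B : {set 'I_k}) : nat :=
  (\sum_(x in A :\: B) #|[set y in B | (y < x)%N]|)%N.

Definition bd_entry (K : fieldType) k (g : graph k) (s : nat)
    (A B : {set 'I_k}) : K :=
  if [&& A \in faces g s, B \in faces g s.-1 & B \subset A]
  then (-1) ^+ bd_sign A B else 0.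

(* boundary map from s-vertex faces to (s-1)-vertex faces (zero for s = 0),
   written as a matrix indexed by all subsets (non-face rows/columns are 0) *)
Definition bdmx (K : fieldType) k (g : graph k) (s : nat)
    : 'M[K]_(#|{: {set 'I_k}}|) :=
  \matrix_(i, j) (if s is 0 then 0
                  else bd_entry K g s (enum_val i) (enum_val j)).

(* reduced Betti number in dimension s-1: dim ker d_s - rank d_(s+1) *)
Definition reduced_betti (K : fieldType) k (g : graph k) (s : nat) : nat :=
  ((#|faces g s| - \rank (bdmx K g s)) - \rank (bdmx K g s.+1))%N.

(* sum over all dimensions i >= -1 (faces have at most k vertices) *)
Definition total_betti (K : fieldType) k (g : graph k) : nat :=
  (\sum_(s < k.+2) reduced_betti K g s)%N.

Definition has_induced h (H : graph h) k (G : graph k) : bool :=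
  [exists f : {ffun 'I_h -> 'I_k},
     injectiveb f && [forall x, [forall y, G (f x, f y) == H (x, y)]]].

Definition bH (K : fieldType) h (H : graph h) (n : nat) : nat :=
  (\max_(k < n.+1)
     \max_(G : graph k | simple_graph G && ~~ has_induced H G)
        total_betti K G)%N.

(* complete multipartite graph K_{i1,1,...,1} with m parts (m >= 1):
   vertices 0..i1-1 form part 0, each further vertex is its own part *)
Definition mpart (i1 m : nat) (v : 'I_(i1 + m.-1)) : nat :=
  if (v < i1)%N then 0%N else (v - i1).+1.

Definition Kmulti (i1 m : nat) : graph (i1 + m.-1) :=
  [ffun p => @mpart i1 m p.1 != @mpart i1 m p.2].

(* If G has no induced K_{i1,1,...,1} with i1 <= 2, then for every clique t with
   at least m-1 vertices the vertices x with t ∪ {x} a clique form a clique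
   themselves: two non-adjacent ones would span an induced copy together with t
   (for i1 = 1 a single one already gives an m-clique).  Hence all faces
   containing a given (m-1)-face share a cone point, and pairing each face with
   the face obtained by adding or removing its cone point exhibits nonsingular
   diagonal minors of two consecutive boundary matrices whose orders add up to
   the number of faces of the middle size.  So the reduced homology vanishes in
   dimensions >= m-1, and below that it is bounded by the number of faces, at
   most m n^(m-1) in total.
   Conversely the complete (m-1)-partite graph with parts of size t = n/(m-1)
   has no m-clique, hence no induced copy, and its top homology has dimension at
   least t^(m-1) minus the number of (m-2)-faces, which is at least t^(m-1)/2. *)

From mathcomp Require Import all_boot all_order all_algebra.
From mathcomp Require Import zify.
Set Implicit Arguments. Unset Strict Implicit. Unset Printing Implicit Defensive.
Import GRing.Theory.

Section RankBounds.
Variable F : fieldType.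
Local Open Scope ring_scope.

Lemma mxrank_colsub m n n' (f : 'I_n' -> 'I_n) (M : 'M[F]_(m, n)) :
  (\rank (colsub f M) <= \rank M)%N.
Proof.
have -> : colsub f M = (rowsub f M^T)^T by apply/matrixP => i j; rewrite !mxE.
by rewrite mxrank_tr -[leqRHS]mxrank_tr; apply/mxrankS/rowsub_sub.
Qed.

Lemma card_le_mxrank_diag_submx (T : finType) (M : 'M[F]_#|T|) (A : {set T})
    (r c : T -> T) :
  (forall x, x \in A -> M (enum_rank (r x)) (enum_rank (c x)) != 0) ->
  (forall x y, x \in A -> y \in A -> x != y ->
      M (enum_rank (r x)) (enum_rank (c y)) = 0) ->
  (#|A| <= \rank M)%N.
Proof.
move=> diag_nz offdiag0.
pose e (i : 'I_#|A|) : T := enum_val i.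
have eA i : e i \in A by apply: enum_valP.
pose D := mxsub (fun i => enum_rank (r (e i))) (fun i => enum_rank (c (e i))) M.
have D_diag : D = diag_mx (\row_i D i i).
  apply/matrixP => i j; rewrite !mxE; case: eqVneq => [->|ij]; first by rewrite mulr1n.
  by rewrite mulr0n offdiag0 //; apply: contra ij => /eqP /enum_val_inj ->.
have D_unit : D \in unitmx.
  rewrite unitmxE D_diag det_diag unitfE; apply/prodf_neq0 => i _.
  by rewrite !mxE diag_nz.
rewrite -(mxrank_unit D_unit) /D mxsubrc.
by apply: leq_trans (mxrank_colsub _ _); apply/mxrankS/rowsub_sub.
Qed.

Lemma mxrank_le_card_support (T : finType) (M : 'M[F]_#|T|) (B : {set T}) :
  (forall i j, enum_val j \notin B -> M i j = 0) -> (\rank M <= #|B|)%N.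
Proof.
move=> col0; pose f (i : 'I_#|B|) : 'I_#|T| := enum_rank (enum_val i : T).
rewrite -mxrank_tr; apply: leq_trans (rank_leq_row (rowsub f M^T)).
apply/mxrankS/row_subP => j; have [jB|jNB] := boolP (enum_val j \in B).
  have -> : row j M^T = row (enum_rank_in jB (enum_val j)) (rowsub f M^T).
    by apply/matrixP => a b; rewrite !mxE /f enum_rankK_in // enum_valK.
  exact: row_sub.
have -> : row j M^T = 0 by apply/matrixP => a b; rewrite !mxE col0.
exact: sub0mx.
Qed.

End RankBounds.

Section Cliques.
Variables (k : nat) (g : graph k).

Lemma cliqueP (A : {set 'I_k}) :
  reflect (forall x y, x \in A -> y \in A -> x != y -> g (x, y)) (is_clique g A).
Proof.
apply: (iffP forallP) => [cA x y xA yA xy | cA x].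
  by move: (cA x); rewrite xA /= => /forallP /(_ y); rewrite yA xy.
apply/implyP => xA; apply/forallP => y; apply/implyP => yA; apply/implyP => xy.
exact: cA.
Qed.

Lemma clique_subset (A B : {set 'I_k}) :
  A \subset B -> is_clique g B -> is_clique g A.
Proof.
by move=> /subsetP AB /cliqueP cB; apply/cliqueP => x y xA yA; apply: cB; apply: AB.
Qed.

Lemma facesE s A : (A \in faces g s) = is_clique g A && (#|A| == s).
Proof. by rewrite inE. Qed.

Lemma card_faces_le s : #|faces g s| <= 'C(k, s).
Proof.
rewrite -[X in 'C(X, _)]card_ord -card_draws; apply: subset_leq_card.
by apply/subsetP => A; rewrite !inE => /andP [].
Qed.

Lemma bdmxE (K : fieldType) s (A B : {set 'I_k}) :
  bdmx K g s.+1 (enum_rank A) (enum_rank B) = bd_entry K g s.+1 A B.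
Proof. by rewrite /bdmx mxE !enum_rankK. Qed.

Definition star (t : {set 'I_k}) := [set x | is_clique g (x |: t)].

Lemma clique_sub_star t : is_clique g t -> t \subset star t.
Proof.
by move=> ct; apply/subsetP => x xt; rewrite inE (setUidPr _); rewrite ?sub1set.
Qed.

End Cliques.

Section StarCone.
Variables (K : fieldType) (k : nat) (g : graph k) (m : nat).
Hypothesis star_clique :
  forall t, is_clique g t -> m.-1 <= #|t| -> is_clique g (star g t).

Lemma star_subset_eq (t u : {set 'I_k}) :
  t \subset u -> is_clique g u -> m.-1 <= #|t| -> star g t = star g u.
Proof.
move=> tu cu ht; apply/setP => x; rewrite !inE; apply/idP/idP => cx; last first.
  by apply: clique_subset cx; apply: setUS.
have cst : is_clique g (star g t) by apply: star_clique => //; apply: clique_subset cu.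
apply: clique_subset cst; rewrite subUset sub1set inE cx /=.
by apply/subsetP => y yu; rewrite inE; apply: clique_subset cu; rewrite subUset sub1set yu.
Qed.

Variable v0 : 'I_k.

(* A cone point chosen for every face ([v0] is only a default: the pick succeeds
   on nonempty cliques); faces sharing a subface of size m-1 share it. *)
Definition apex (t : {set 'I_k}) := odflt v0 [pick x in star g t].

Lemma apex_in_star (t : {set 'I_k}) : is_clique g t -> t != set0 -> apex t \in star g t.
Proof.
move=> ct /set0Pn [y yt]; rewrite /apex; case: pickP => [x //|/(_ y)].
by move/subsetP: (clique_sub_star ct) => /(_ y yt) ->.
Qed.

Lemma apex_subset_eq (t u : {set 'I_k}) :
  t \subset u -> is_clique g u -> m.-1 <= #|t| -> apex t = apex u.
Proof. by move=> tu cu ht; rewrite /apex (star_subset_eq tu cu ht). Qed.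

Definition coned := [set t | apex t \in t].

Lemma card_faces_coned_le_rank s : m.-1 <= s ->
  #|faces g s.+1 :&: coned| <= \rank (bdmx K g s.+1).
Proof.
move=> ms; apply: (card_le_mxrank_diag_submx (r := id) (c := fun t => t :\ apex t)).
  move=> x /setIP [xF]; rewrite inE => ax.
  move: (xF); rewrite facesE => /andP [cx /eqP xs].
  rewrite bdmxE /bd_entry xF facesE subD1set (clique_subset (subD1set _ _) cx).
  by move: xs; rewrite (cardsD1 (apex x)) ax add1n => -[->]; rewrite eqxx signr_eq0.
move=> x y /setIP [xF]; rewrite inE => ax /setIP [yF]; rewrite inE => ay xy.
rewrite bdmxE /bd_entry; case: ifP => // /and3P [_ yxF yx]; exfalso.
move: xF yF yxF; rewrite !facesE => /andP [cx /eqP xs] /andP [cy _] /andP [_ /eqP ys].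
have e : apex x = apex y.
  by rewrite -(apex_subset_eq yx cx) ?ys // (apex_subset_eq (subD1set y _) cy) ?ys.
have ayx : apex y \in x by rewrite -e.
move/negP: xy; apply; rewrite -(setD1K ay) eq_sym eqEcard.
by rewrite subUset sub1set ayx yx cardsU1 ys xs !inE eqxx /= add1n.
Qed.

Lemma card_faces_unconed_le_rank s : m.-1 <= s ->
  #|faces g s.+1 :\: coned| <= \rank (bdmx K g s.+2).
Proof.
move=> ms; apply: (card_le_mxrank_diag_submx (r := fun t => apex t |: t) (c := id)).
  move=> x /setDP [xF]; rewrite inE => ax.
  move: (xF); rewrite facesE => /andP [cx /eqP xs].
  have xn0 : x != set0 by rewrite -card_gt0 xs.
  move: (apex_in_star cx xn0); rewrite inE => cax.
  by rewrite bdmxE /bd_entry facesE cax cardsU1 ax xs xF subsetUr !eqxx signr_eq0.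
move=> x y /setDP [xF]; rewrite inE => ax /setDP [yF]; rewrite inE => ay xy.
rewrite bdmxE /bd_entry; case: ifP => // /and3P [axF _ yax]; exfalso.
move: xF yF axF; rewrite !facesE => /andP [_ /eqP xs] /andP [_ /eqP ys] /andP [cax _].
have e : apex y = apex x.
  have ms1 : m.-1 <= s.+1 := leqW ms.
  by rewrite (apex_subset_eq yax cax) ?ys // -(apex_subset_eq (subsetUr _ _) cax) ?xs.
move/negP: xy; apply; rewrite eq_sym eqEcard xs ys leqnn andbT.
apply/subsetP => z zy; move/subsetP: yax => /(_ z zy) /setU1P [ez|//].
by move: ay; rewrite e -ez zy.
Qed.

End StarCone.

Lemma reduced_betti_eq0 (K : fieldType) k (g : graph k) m s :
  (forall t, is_clique g t -> m.-1 <= #|t| -> is_clique g (star g t)) ->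
  m <= s.+1 -> reduced_betti K g s.+1 = 0.
Proof.
move=> star_clique ms; have ms' : m.-1 <= s by move: ms; case: (m).
rewrite /reduced_betti; have [F0|[t tF]] := set_0Vmem (faces g s.+1).
  by rewrite F0 cards0 !sub0n.
have [v0 _] : {v | v \in t}.
  by apply/sigW/set0Pn; move: tF; rewrite facesE -card_gt0 => /andP [_ /eqP ->].
apply/eqP; rewrite subn_eq0 leq_subLR -(cardsID (coned g v0) (faces g s.+1)).
apply: leq_add.
  exact: (card_faces_coned_le_rank K star_clique v0 ms').
exact: (card_faces_unconed_le_rank K star_clique v0 ms').
Qed.

Lemma simple_graphP k (g : graph k) : simple_graph g ->
  (forall x, g (x, x) = false) /\ (forall x y, g (x, y) = g (y, x)).
Proof.
move=> /andP [/forallP loopless /forallP sym]; split => [x|x y].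
  exact: negbTE (loopless x).
by move: (sym x) => /forallP /(_ y) /eqP.
Qed.

Lemma Kmulti1E m (a b : 'I_(1 + m.-1)) : Kmulti 1 m (a, b) = (a != b).
Proof.
have mpartE (v : 'I_(1 + m.-1)) : @mpart 1 m v = v.
  by rewrite /mpart; case: v => [[|v] ?] //=; rewrite subn1.
by rewrite /Kmulti ffunE !mpartE val_eqE.
Qed.

Lemma Kmulti2E m (a b : 'I_(2 + m.-1)) :
  Kmulti 2 m (a, b) = (a != b) && ((1 < a) || (1 < b)).
Proof.
rewrite /Kmulti ffunE /mpart -val_eqE /=.
by case: a b => [[|[|a]] ?] [[|[|b]] ?] //=; rewrite !subn2 andbT.
Qed.

Lemma has_induced_seq h (H : graph h) k (G : graph k) (x0 : 'I_k) (L : seq 'I_k) :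
  uniq L -> h <= size L ->
  (forall a b : 'I_h, G (nth x0 L a, nth x0 L b) = H (a, b)) -> has_induced H G.
Proof.
move=> uL hL GH; apply/existsP; exists [ffun a : 'I_h => nth x0 L a].
have ltL (a : 'I_h) : a < size L by apply: leq_trans (ltn_ord a) hL.
apply/andP; split.
  by apply/injectiveP => a b; rewrite !ffunE => /eqP; rewrite nth_uniq // => /eqP/val_inj.
by apply/forallP => a; apply/forallP => b; rewrite !ffunE GH.
Qed.

Section InducedKmulti.
Variables (k : nat) (g : graph k) (m : nat).
Hypothesis g_simple : simple_graph g.

Lemma clique_has_induced_Kmulti1 (A : {set 'I_k}) :
  is_clique g A -> m.-1 < #|A| -> has_induced (Kmulti 1 m) g.
Proof.
move=> /cliqueP cA mA; have [loopless _] := simple_graphP g_simple.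
have [x0 _] : {x | x \in A} by apply/sigW/set0Pn; rewrite -card_gt0; case: #|A| mA.
apply: (has_induced_seq (x0 := x0) (L := enum A)); first exact: enum_uniq.
  by rewrite -cardE add1n.
have inA i : i < size (enum A) -> nth x0 (enum A) i \in A.
  by move=> i_lt; rewrite -mem_enum mem_nth.
move=> a b; rewrite Kmulti1E; have [->|ab] := eqVneq a b; first exact: loopless.
have ltA (c : 'I_(1 + m.-1)) : c < size (enum A).
  by apply: leq_trans (ltn_ord c) _; rewrite -cardE add1n.
by apply: cA; rewrite ?inA ?nth_uniq ?enum_uniq.
Qed.

Lemma nonedge_star_has_induced_Kmulti2 (t : {set 'I_k}) x y :
  is_clique g (x |: t) -> is_clique g (y |: t) -> x != y -> ~~ g (x, y) ->
  x \notin t -> y \notin t -> m.-1 <= #|t| -> has_induced (Kmulti 2 m) g.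
Proof.
move=> /cliqueP cx /cliqueP cy xy nxy xt yt mt.
have [loopless sym] := simple_graphP g_simple.
apply: (has_induced_seq (x0 := x) (L := [:: x, y & enum t])).
- by rewrite /= !inE negb_or xy !mem_enum xt yt enum_uniq.
- by rewrite /= -cardE add2n.
have tE j : j < m.-1 -> nth x (enum t) j \in t.
  by move=> jm; rewrite -mem_enum mem_nth // -cardE (leq_trans jm).
have tx j : j < m.-1 -> g (x, nth x (enum t) j).
  move=> jm; apply: cx; rewrite ?setU11 ?setU1r ?tE //.
  by apply: contraNneq xt => ->; rewrite tE.
have ty j : j < m.-1 -> g (y, nth x (enum t) j).
  move=> jm; apply: cy; rewrite ?setU11 ?setU1r ?tE //.
  by apply: contraNneq yt => ->; rewrite tE.
move=> a b; rewrite Kmulti2E.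
case: a b => [[|[|a]] ha] [[|[|b]] hb];
  rewrite /= ?loopless ?(sym y x) ?(negbTE nxy) ?(sym _ x) ?(sym _ y) ?tx ?ty //.
rewrite andbT -val_eqE /= !eqSS; case: eqP => [->|/eqP ab]; first exact: loopless.
have /cliqueP ct : is_clique g t by apply: clique_subset (subsetUr [set x] t) _; apply/cliqueP.
by apply: ct; rewrite ?tE ?nth_uniq ?enum_uniq -?cardE ?(leq_trans _ mt).
Qed.

End InducedKmulti.

Lemma Kmulti_free_star_clique i1 m k (g : graph k) (t : {set 'I_k}) :
  1 <= i1 <= 2 -> simple_graph g -> ~~ has_induced (Kmulti i1 m) g ->
  is_clique g t -> m.-1 <= #|t| -> is_clique g (star g t).
Proof.
move=> i1_12 g_simple g_free ct mt; have [_ sym] := simple_graphP g_simple.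
apply/cliqueP => x y; rewrite !inE => cx cy xy; apply/negPn/negP => nxy.
have xt : x \notin t.
  apply: contra nxy => xt; rewrite sym.
  by move/cliqueP: cy; apply; rewrite ?setU11 ?setU1r // eq_sym.
have yt : y \notin t.
  by apply: contra nxy => yt; move/cliqueP: cx; apply; rewrite ?setU11 ?setU1r.
move/negP: g_free; apply; case/andP: i1_12; case: i1 => [//|[|[|//]]] _ _.
  by apply: (clique_has_induced_Kmulti1 g_simple cx); rewrite cardsU1 xt ltnS.
exact: (nonedge_star_has_induced_Kmulti2 g_simple cx cy xy nxy xt yt mt).
Qed.

Lemma induced_Kmulti_clique i1 m k (g : graph k) :
  1 <= i1 <= 2 -> 1 <= m -> has_induced (Kmulti i1 m) g ->
  exists2 A, is_clique g A & #|A| = m.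
Proof.
move=> i1_12 m_gt0 /existsP [f /andP [/injectiveP f_inj /forallP fH]].
have gf a b : g (f a, f b) = Kmulti i1 m (a, b) by move: (fH a) => /forallP /(_ b) /eqP.
case/andP: i1_12; case: i1 f f_inj fH gf => [//|[|[|//]]] f f_inj _ gf _ _.
  exists (f @: setT); last by rewrite card_imset // cardsT card_ord add1n prednK.
  apply/cliqueP => _ _ /imsetP [a _ ->] /imsetP [b _ ->] fab.
  by rewrite gf Kmulti1E; apply: contraNneq fab => ->.
pose a0 : 'I_(2 + m.-1) := ord0.
exists (f @: [set~ a0]); last by rewrite card_imset // cardsC1 card_ord add2n prednK.
apply/cliqueP => _ _ /imsetP [a] + -> /imsetP [b] + -> fab; rewrite !inE => a_gt0 b_gt0.
have ab : a != b by apply: contraNneq fab => ->.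
rewrite gf Kmulti2E ab.
by move: a_gt0 b_gt0 ab {fab}; case: a => [[|[|a]] ?]; case: b => [[|[|b]] ?].
Qed.

Lemma leq_wexp2r a b e : a <= b -> a ^ e <= b ^ e.
Proof. by move=> ab; elim: e => [|e IHe] //; rewrite !expnS leq_mul. Qed.

Lemma leq_ffact_exp n s : n ^_ s <= n ^ s.
Proof.
elim: s n => [|s IHs] [|n] //; rewrite ffactnS expnS leq_mul2l /=.
exact: leq_trans (IHs n) (leq_wexp2r _ (leqnSn n)).
Qed.

Lemma leq_bin_exp n s : 'C(n, s) <= n ^ s.
Proof. by apply: leq_trans (leq_ffact_exp n s); rewrite -bin_ffact leq_pmulr ?fact_gt0. Qed.

Lemma leq_sum_ord_support m X K (F : nat -> nat) :
  (forall s, m <= s -> F s = 0) -> (forall s, F s <= X) ->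
  \sum_(s < K) F s <= m * X.
Proof.
move=> F0 FX; suff : \sum_(s < K) F s <= minn K m * X.
  by move/leq_trans; apply; rewrite leq_mul2r geq_minr orbT.
elim: K => [|K IHK]; first by rewrite big_ord0.
rewrite big_ord_recr /=; have [Km|mK] := ltnP K m.
  have /minn_idPl -> := Km; rewrite mulSnr; apply: leq_add (FX K).
  by move: IHK; have /minn_idPl -> := ltnW Km.
rewrite F0 // addn0; have /minn_idPr -> := leqW mK.
by move: IHK; have /minn_idPr -> := mK.
Qed.

Lemma total_betti_Kmulti_free_le (K : fieldType) i1 m k (g : graph k) n :
  1 <= i1 <= 2 -> 1 <= m -> simple_graph g ->
  ~~ has_induced (Kmulti i1 m) g -> k <= n -> 1 <= n ->
  total_betti K g <= m * n ^ (m - 1).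
Proof.
move=> i1_12 m_gt0 g_simple g_free kn n_gt0.
have star_clique t := @Kmulti_free_star_clique i1 m k g t i1_12 g_simple g_free.
have betti0 s : m <= s -> reduced_betti K g s = 0.
  case: s => [|s] ms; first by have := leq_trans m_gt0 ms.
  exact: reduced_betti_eq0 star_clique ms.
apply: leq_sum_ord_support => s; first exact: betti0.
have [ms|sm] := leqP m s; first by rewrite betti0.
rewrite /reduced_betti; apply: leq_trans (leq_subr _ _) _; apply: leq_trans (leq_subr _ _) _.
apply: leq_trans (card_faces_le g s) _; apply: leq_trans (leq_bin_exp k s) _.
by apply: leq_trans (leq_wexp2r s kn) _; apply: leq_pexp2l => //; rewrite leq_subRL.
Qed.

Lemma bdmx_eq0 (K : fieldType) k (g : graph k) s :
  faces g s = set0 -> bdmx K g s = 0%R.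
Proof.
move=> no_faces; apply/matrixP => i j; rewrite !mxE.
by case: s no_faces => // s no_faces; rewrite /bd_entry no_faces inE.
Qed.

Lemma mxrank_bdmx_le (K : fieldType) k (g : graph k) s :
  \rank (bdmx K g s.+1) <= #|faces g s|.
Proof.
apply: mxrank_le_card_support => i j jF.
by rewrite mxE /bd_entry (negbTE jF) andbF.
Qed.

Lemma reduced_betti_top_ge (K : fieldType) k (g : graph k) s :
  faces g s.+2 = set0 ->
  #|faces g s.+1| - #|faces g s| <= reduced_betti K g s.+1.
Proof.
move=> no_faces; rewrite /reduced_betti (bdmx_eq0 K no_faces) mxrank0 subn0.
by rewrite leq_sub2l ?mxrank_bdmx_le.
Qed.

Lemma reduced_betti_le_total (K : fieldType) k (g : graph k) s :
  s < k.+2 -> reduced_betti K g s <= total_betti K g.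
Proof. by move=> sk; rewrite /total_betti (bigD1 (Ordinal sk)) //= leq_addr. Qed.

Lemma total_betti_le_bH (K : fieldType) h (H : graph h) k (g : graph k) n :
  k <= n -> simple_graph g -> ~~ has_induced H g ->
  total_betti K g <= bH K H n.
Proof.
move=> kn g_simple g_free; rewrite /bH.
apply: leq_trans (leq_bigmax (Ordinal (kn : (k < n.+1)))).
by apply: (@leq_bigmax_cond _ _ (fun g : graph k => total_betti K g) g); rewrite g_simple g_free.
Qed.

Lemma bH_Kmulti_le (K : fieldType) i1 m n :
  1 <= i1 <= 2 -> 1 <= m -> 1 <= n ->
  bH K (Kmulti i1 m) n <= m * n ^ (m - 1).
Proof.
move=> i1_12 m_gt0 n_gt0; apply/bigmax_leqP => [[k kn]] _.
apply/bigmax_leqP => g /andP [g_simple g_free].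
exact: (total_betti_Kmulti_free_le K i1_12 m_gt0 g_simple g_free kn n_gt0).
Qed.

Definition graph0 : graph 0 := [ffun _ => false].

Lemma total_betti_graph0_gt0 (K : fieldType) : 0 < total_betti K graph0.
Proof.
have no_faces : faces graph0 1 = set0.
  apply/setP => A; rewrite facesE inE; apply/negbTE; rewrite negb_and orbC.
  by have := max_card (mem A); rewrite card_ord leqn0 => /eqP ->.
apply: leq_trans (reduced_betti_le_total K graph0 (isT : (0 < 2))).
rewrite /reduced_betti (bdmx_eq0 K no_faces) mxrank0 subn0.
rewrite (_ : bdmx _ _ 0 = 0%R) ?mxrank0 ?subn0; last by apply/matrixP => i j; rewrite !mxE.
rewrite card_gt0; apply/set0Pn; exists set0; rewrite facesE cards0 eqxx andbT.
by apply/cliqueP => x; rewrite inE.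
Qed.

Section Turan.
Variables (p t : nat).
Hypothesis p_gt0 : 0 < p.

Definition turan : graph (p * t) :=
  [ffun e : 'I_(p * t) * 'I_(p * t) => e.1 %% p != e.2 %% p].

Lemma turan_simple : simple_graph turan.
Proof.
apply/andP; split; apply/forallP => x; first by rewrite ffunE eqxx.
by apply/forallP => y; rewrite !ffunE /= (eq_sym (y %% p)).
Qed.

Lemma turan_clique_le (A : {set 'I_(p * t)}) : is_clique turan A -> #|A| <= p.
Proof.
move=> /cliqueP cA; pose res (v : 'I_(p * t)) : 'I_p := Ordinal (ltn_pmod v p_gt0).
rewrite -[leqRHS]card_ord; apply: (@leq_card_in _ _ res) => a b aA bA /(congr1 val) /= e.
by apply/eqP/negPn/negP => /(cA a b aA bA); rewrite ffunE /= e eqxx.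
Qed.

Lemma turan_Kmulti_free i1 : 1 <= i1 <= 2 -> ~~ has_induced (Kmulti i1 p.+1) turan.
Proof.
move=> i1_12; apply/negP => /(induced_Kmulti_clique i1_12 (ltn0Sn p)) [A cA card_A].
by have := turan_clique_le cA; rewrite card_A ltnn.
Qed.

Lemma turan_vertex_subproof (i : 'I_p) (j : 'I_t) : i + p * j < p * t.
Proof.
apply: (@leq_trans (p * j.+1)); first by rewrite mulnS ltn_add2r.
by rewrite leq_mul2l ltn_ord orbT.
Qed.

Definition turan_vertex i j : 'I_(p * t) := Ordinal (turan_vertex_subproof i j).

Lemma turan_vertex_mod i j : turan_vertex i j %% p = i.
Proof. by rewrite /= addnC mulnC modnMDl modn_small. Qed.

Lemma turan_vertex_div i j : turan_vertex i j %/ p = j.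
Proof. by rewrite /= addnC mulnC divnMDl // divn_small ?addn0. Qed.

Lemma turan_vertex_inj i j i' j' :
  turan_vertex i j = turan_vertex i' j' -> i = i' /\ j = j'.
Proof.
move=> e; have := turan_vertex_mod i j; have := turan_vertex_div i j.
by rewrite e turan_vertex_mod turan_vertex_div => /val_inj <- /val_inj <-.
Qed.

Definition transversal (h : {ffun 'I_p -> 'I_t}) : {set 'I_(p * t)} :=
  [set turan_vertex i (h i) | i : 'I_p].

Lemma transversal_face h : transversal h \in faces turan p.
Proof.
have vertex_inj : injective (fun i => turan_vertex i (h i)).
  by move=> i j /turan_vertex_inj [].
rewrite facesE card_imset // card_ord eqxx andbT.
apply/cliqueP => _ _ /imsetP [i _ ->] /imsetP [j _ ->] ij.
by rewrite ffunE /= !turan_vertex_mod; apply: contraNneq ij => /val_inj ->.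
Qed.

Lemma transversal_inj : injective transversal.
Proof.
move=> h1 h2 e; apply/ffunP => i.
have : turan_vertex i (h1 i) \in transversal h2 by rewrite -e; apply: imset_f.
by case/imsetP => j _ /turan_vertex_inj [<-].
Qed.

Lemma card_faces_turan_ge : t ^ p <= #|faces turan p|.
Proof.
have -> : t ^ p = #|transversal @: [set: {ffun 'I_p -> 'I_t}]|.
  by rewrite (card_imset _ transversal_inj) cardsT card_ffun !card_ord.
by apply/subset_leq_card/subsetP => _ /imsetP [h _ ->]; apply: transversal_face.
Qed.

End Turan.

Lemma total_betti_turan_ge (K : fieldType) p t : 0 < t ->
  t ^ p.+1 - (p.+1 * t) ^ p <= total_betti K (turan p.+1 t).
Proof.
move=> t_gt0; set g := turan p.+1 t.
have no_faces : faces g p.+2 = set0.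
  apply/setP => A; rewrite facesE inE; apply/negbTE/negP => /andP [cA /eqP card_A].
  by have := turan_clique_le (ltn0Sn p) cA; rewrite card_A ltnn.
have top : p.+1 < (p.+1 * t).+2 by rewrite ltnS leqW // leq_pmulr.
apply: leq_trans (reduced_betti_le_total K g top).
apply: leq_trans (reduced_betti_top_ge K no_faces).
apply: leq_sub; first exact: card_faces_turan_ge.
exact: leq_trans (card_faces_le g p) (leq_bin_exp _ p).
Qed.

Lemma total_betti_turan_half (K : fieldType) p t : 2 * p.+1 ^ p <= t ->
  t ^ p.+1 <= 2 * total_betti K (turan p.+1 t).
Proof.
move=> t_large; have t_gt0 : 0 < t by apply: leq_trans t_large; rewrite muln_gt0 expn_gt0.
have := total_betti_turan_ge K p t_gt0.
have : 2 * (p.+1 * t) ^ p <= t ^ p.+1.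
  by rewrite expnMn mulnA expnS leq_mul2r t_large orbT.
lia.
Qed.

Lemma bH_Kmulti_ge (K : fieldType) i1 p n :
  1 <= i1 <= 2 -> p.+1 * (2 * p.+1 ^ p) <= n ->
  n ^ p.+1 <= (2 * p.+1) ^ p.+1 * (2 * bH K (Kmulti i1 p.+2) n).
Proof.
move=> i1_12 n_large; set P := p.+1; set t := n %/ P.
have t_large : 2 * P ^ p <= t by have := leq_div2r P n_large; rewrite mulKn.
have Pt_le_n : P * t <= n by rewrite mulnC leq_divM.
have n_le : n <= 2 * P * t.
  have t_gt0 : 0 < t by apply: leq_trans t_large; rewrite muln_gt0 expn_gt0.
  have := ltn_ceil n (ltn0Sn p); rewrite -/t -/P mulSn => /ltnW.
  by move/leq_trans; apply; rewrite -mulnA mulnC mul2n -addnn leq_add2r leq_pmulr.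
apply: leq_trans (leq_wexp2r P n_le) _; rewrite expnMn leq_mul2l; apply/orP; right.
apply: leq_trans (total_betti_turan_half K t_large) _; rewrite leq_mul2l.
exact: total_betti_le_bH Pt_le_n (turan_simple _ _) (turan_Kmulti_free _ _ i1_12).
Qed.

Lemma bH_Kmulti1_gt0 (K : fieldType) i1 n :
  1 <= i1 -> 0 < bH K (Kmulti i1 1) n.
Proof.
move=> i1_gt0; apply: leq_trans (total_betti_graph0_gt0 K) (total_betti_le_bH K _ _ _).
- exact: leq0n.
- by apply/andP; split; apply/forallP => -[].
apply/existsP => -[f _]; have x : 'I_(i1 + 0) by rewrite addn0; exists i1.-1; rewrite prednK.
by case: (f x).
Qed.

Lemma bH_Kmulti_lower_bound (K : fieldType) i1 m :
  1 <= i1 <= 2 -> 1 <= m ->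
  exists c N, (0 < c) /\
    forall n, N <= n -> n ^ (m - 1) <= c * bH K (Kmulti i1 m) n.
Proof.
move=> i1_12 m_gt0; case: m m_gt0 => [//|[|p]] _.
  exists 1, 0; split=> // n _; rewrite expn0 mul1n.
  by apply: bH_Kmulti1_gt0; case/andP: i1_12.
exists (2 * (2 * p.+1) ^ p.+1), (p.+1 * (2 * p.+1 ^ p)).
split; first by rewrite muln_gt0 expn_gt0.
by move=> n n_large; rewrite subn1 -mulnA mulnCA; apply: bH_Kmulti_ge.
Qed.

Theorem theorem1p5 (K : fieldType) (i1 m : nat) :
  (1 <= i1 <= 2)%N -> (1 <= m)%N ->
  exists (c N : nat), (0 < c)%N /\
    forall n : nat, (N <= n)%N ->
      (n ^ (m - 1) <= c * bH K (Kmulti i1 m) n)%N /\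
      (bH K (Kmulti i1 m) n <= c * n ^ (m - 1))%N.
Proof.
move=> i1_12 m_gt0.
have [c [N [c_gt0 lower]]] := bH_Kmulti_lower_bound K i1_12 m_gt0.
exists (c * m), (maxn N 1); split=> [|n]; first by rewrite muln_gt0 c_gt0.
rewrite geq_max => /andP [Nn n_gt0]; split.
  by apply: leq_trans (lower n Nn) _; rewrite mulnAC leq_pmulr.
apply: leq_trans (bH_Kmulti_le K i1_12 m_gt0 n_gt0) _.
by rewrite leq_mul2r leq_pmull ?orbT.
Qed.
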